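(* Fix $n\ge1$, a sample $x_1,\dots,x_n\in\mathbb{X}$ and $\epsilon\in(0,1]$, and suppose $\Gamma_\epsilon$ is nonempty and $\Gamma_\epsilon\subset A_\mu$ (so $\mu(\Gamma_\epsilon)>0$). Let $\mu_\epsilon=\mu(\cdot\mid\Gamma_\epsilon)$. Then $$D(\mu_\epsilon\|\hat\mu_{n,\epsilon})\le\frac{2\log(e/\epsilon)}{\mu(\Gamma_\epsilon)}\,V(\mu/\sigma_\epsilon,\hat\mu_n/\sigma_\epsilon).$$
   Context: $\mathbb{X}$ is a countably infinite set, $\mu$ a probability on $\mathbb{X}$ with pmf $f_\mu(x)=\mu(\{x\})$ and support $A_\mu=\{x:f_\mu(x)>0\}$. $\log$ is the logarithm to a fixed base $b>1$. I-divergence: $D(\mu\|\nu)=\sum_{x\in A_\mu}f_\mu(x)\log\frac{f_\mu(x)}{f_\nu(x)}$ if $\mu\ll\nu$, $+\infty$ otherwise. For the sample $x_1,\dots,x_n$, $\hat\mu_n(A)=\frac1n\sum_{k}\mathbb{1}_A(x_k)$; $\Gamma_\epsilon=\{x:\hat\mu_n(\{x\})\ge\epsilon\}$; $\hat\mu_{n,\epsilon}=\hat\mu_n(\cdot\mid\Gamma_\epsilon)$. $\sigma_\epsilon$ is the (finite) $\sigma$-field generated by the partition $\Pi_\epsilon=\{\{x\}:x\in\Gamma_\epsilon\}\cup\{\mathbb{X}\setminus\Gamma_\epsilon\}$, and $V(\mu/\sigma_\epsilon,\hat\mu_n/\sigma_\epsilon)=\sup_{A\in\sigma_\epsilon}|\mu(A)-\hat\mu_n(A)|$.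 *)

From Stdlib Require Import Reals Lra List Classical ClassicalEpsilon.
Import ListNotations.
Open Scope R_scope.

(* The countably infinite set X is taken to be nat. *)
Definition X := nat.

Definition logb (b x : R) : R := ln x / ln b.

(* Value of a convergent series (sum_{k>=0} g k), chosen by epsilon;
   equals the unique l with infinite_sum g l when the series converges. *)
Definition series (g : nat -> R) : R :=
  epsilon (inhabits 0) (fun l => infinite_sum g l).

(* Probability measure mu with pmf f: mu(A) = sum_{x in A} f x.
   Subsets of X are represented as boolean predicates. *)
Definition mu (f : X -> R) (A : X -> bool) : R :=
  series (fun x => if A x then f x else 0).

Definition is_pmf (f : X -> R) : Prop :=
  (forall x, 0 <= f x) /\ infinite_sum f 1.

(* Empirical measure of the sample xs (n = length xs). *)
Definition emp (xs : list X) (A : X -> bool) : R :=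
  INR (length (filter A xs)) / INR (length xs).

Definition emp_pt (xs : list X) (x : X) : R :=
  emp xs (fun y => Nat.eqb y x).

Definition Gam (xs : list X) (eps : R) (x : X) : bool :=
  if Rle_dec eps (emp_pt xs x) then true else false.

Definition cond_pmf (nu : (X -> bool) -> R) (f : X -> R) (G : X -> bool) (x : X) : R :=
  if G x then f x / nu G else 0.

Inductive ER := Fin (r : R) | PInf.
Definition ER_le (a b : ER) : Prop :=
  match a, b with
  | Fin a, Fin b => a <= b
  | _, PInf => True
  | PInf, Fin _ => False
  end.

Definition Idiv (b : R) (p q : X -> R) : ER :=
  if excluded_middle_informative (forall x, 0 < p x -> 0 < q x)
  then Fin (series (fun x => if Rlt_dec 0 (p x)
                             then p x * logb b (p x / q x) else 0))
  else PInf.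

(* sigma_eps: sigma-field generated by the partition
   { {x} : x in Gamma_eps } U { X \ Gamma_eps }, i.e. the unions of blocks,
   i.e. the sets constant on the block X \ Gamma_eps. *)
Definition in_sigma (G : X -> bool) (A : X -> bool) : Prop :=
  forall x y, G x = false -> G y = false -> A x = A y.

Definition Vdist (G : X -> bool) (m1 m2 : (X -> bool) -> R) : R :=
  epsilon (inhabits 0)
    (is_lub (fun r => exists A, in_sigma G A /\ r = Rabs (m1 A - m2 A))).

From Stdlib Require Import Reals List.
From Stdlib Require Import Lra Lia Classical ClassicalEpsilon FunctionalExtensionality.
Import ListNotations.
Open Scope R_scope.

(* Everything lives on the finite set Gamma, where mu_eps = f / mu(Gamma) =: P and
   hat mu_{n,eps} = hat mu_n / hat mu_n(Gamma) =: Q.  Since P <= 1 and Q >= hat mu_n >= eps,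
   ln (P / Q) <= ln (1 / eps), and splitting P ln (P/Q) = Q ln (P/Q) + (P - Q) ln (P/Q) with
   ln r <= r - 1 gives P ln (P/Q) <= (1 + ln (1/eps)) (P - Q)^+ pointwise.  The total variation
   sum (P - Q)^+ is at most V / mu(Gamma): rescaling by the smaller of the two normalisers bounds
   it by sum (mu - hat mu_n)^+ or sum (hat mu_n - mu)^+ over Gamma, divided by mu(Gamma), and
   each of these is |mu(A) - hat mu_n(A)| for a set A inside Gamma, hence in sigma_eps.
   This proves the bound even without the factor 2. *)

Fixpoint lsum (h : X -> R) (l : list X) : R :=
  match l with [] => 0 | a :: l' => h a + lsum h l' end.

Lemma lsum_ext h1 h2 l : (forall x, In x l -> h1 x = h2 x) -> lsum h1 l = lsum h2 l.
Proof. induction l; simpl; intros H; auto. rewrite H, IHl; auto. Qed.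

Lemma lsum_plus h1 h2 l : lsum (fun x => h1 x + h2 x) l = lsum h1 l + lsum h2 l.
Proof. induction l; simpl; [lra|]. rewrite IHl. lra. Qed.

Lemma lsum_minus h1 h2 l : lsum (fun x => h1 x - h2 x) l = lsum h1 l - lsum h2 l.
Proof. induction l; simpl; [lra|]. rewrite IHl. lra. Qed.

Lemma lsum_scal c h l : lsum (fun x => c * h x) l = c * lsum h l.
Proof. induction l; simpl; [ring|]. rewrite IHl. ring. Qed.

Lemma lsum_div h c l : lsum (fun x => h x / c) l = lsum h l / c.
Proof. induction l; simpl; unfold Rdiv in *; [ring|]. rewrite IHl. ring. Qed.

Lemma lsum_le h1 h2 l : (forall x, In x l -> h1 x <= h2 x) -> lsum h1 l <= lsum h2 l.
Proof.
  induction l; simpl; intros H; [lra|].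
  pose proof (H a (or_introl eq_refl)).
  assert (lsum h1 l <= lsum h2 l) by (apply IHl; auto). lra.
Qed.

Lemma lsum_nonneg h l : (forall x, In x l -> 0 <= h x) -> 0 <= lsum h l.
Proof.
  induction l; simpl; intros H; [lra|].
  assert (0 <= h a) by auto. assert (0 <= lsum h l) by auto. lra.
Qed.

Lemma lsum_term_le h l x : (forall x, In x l -> 0 <= h x) -> In x l -> h x <= lsum h l.
Proof.
  induction l; simpl; intros H Hx; [contradiction|].
  assert (0 <= h a) by auto. assert (0 <= lsum h l) by (apply lsum_nonneg; auto).
  destruct Hx as [<-|Hx]; [lra|].
  assert (h x <= lsum h l) by (apply IHl; auto). lra.
Qed.

Lemma lsum_zero h l : (forall x, In x l -> h x = 0) -> lsum h l = 0.
Proof. induction l; simpl; intros H; [reflexivity|]. rewrite H, IHl; auto. lra. Qed.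

Lemma lsum_delta l y c : NoDup l ->
  lsum (fun x => if Nat.eqb y x then c else 0) l = if in_dec Nat.eq_dec y l then c else 0.
Proof.
  induction 1 as [|a l Hna Hnd IH]; simpl; [reflexivity|].
  rewrite IH. destruct (Nat.eqb_spec y a), (in_dec Nat.eq_dec y l), (Nat.eq_dec a y);
    subst; try tauto; lra.
Qed.

Lemma infinite_sum_ext g1 g2 s : (forall x, g1 x = g2 x) -> infinite_sum g1 s -> infinite_sum g2 s.
Proof. intros H. replace g2 with g1; auto. now apply functional_extensionality. Qed.

Lemma infinite_sum_delta (a : nat) (c : R) : infinite_sum (fun x => if Nat.eqb x a then c else 0) c.
Proof.
  assert (Hpart : forall n, sum_f_R0 (fun x => if Nat.eqb x a then c else 0) n = if Nat.leb a n then c else 0).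
  { induction n.
    - simpl. destruct a; reflexivity.
    - rewrite tech5, IHn. destruct (Nat.leb_spec a n), (Nat.eqb_spec (S n) a), (Nat.leb_spec a (S n));
        try lia; lra. }
  intros e He. exists a. intros n Hn. rewrite Hpart.
  destruct (Nat.leb_spec a n); [|lia]. unfold Rdist. rewrite Rminus_diag, Rabs_R0. lra.
Qed.

Lemma infinite_sum_plus g1 g2 s1 s2 : infinite_sum g1 s1 -> infinite_sum g2 s2 ->
  infinite_sum (fun x => g1 x + g2 x) (s1 + s2).
Proof.
  intros H1 H2 e He. destruct (CV_plus _ _ _ _ H1 H2 e He) as [N HN].
  exists N. intros n Hn. rewrite plus_sum. now apply HN.
Qed.

Lemma infinite_sum_minus g1 g2 s1 s2 : infinite_sum g1 s1 -> infinite_sum g2 s2 ->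
  infinite_sum (fun x => g1 x - g2 x) (s1 - s2).
Proof.
  intros H1 H2 e He. destruct (CV_minus _ _ _ _ H1 H2 e He) as [N HN].
  exists N. intros n Hn. rewrite minus_sum. now apply HN.
Qed.

Lemma infinite_sum_finite_support l g : NoDup l -> (forall x, ~ In x l -> g x = 0) ->
  infinite_sum g (lsum g l).
Proof.
  intros Hnd. revert g. induction Hnd as [|a l Hna Hnd IH]; intros g Hg; simpl.
  - apply infinite_sum_ext with (fun x => if Nat.eqb x 0 then 0 else 0).
    { intros x. rewrite Hg by auto. now destruct (Nat.eqb x 0). }
    apply infinite_sum_delta.
  - set (g' := fun x => if Nat.eqb x a then 0 else g x).
    apply infinite_sum_ext with (fun x => (if Nat.eqb x a then g a else 0) + g' x).
    { intro x. unfold g'. destruct (Nat.eqb_spec x a); subst; lra. }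
    replace (lsum g l) with (lsum g' l).
    + apply infinite_sum_plus; [apply infinite_sum_delta|]. apply IH.
      intros x Hx. unfold g'. destruct (Nat.eqb_spec x a); auto. apply Hg. intros [E|E]; [congruence|auto].
    + apply lsum_ext. intros x Hx. unfold g'. destruct (Nat.eqb_spec x a); [subst; contradiction|reflexivity].
Qed.

Lemma series_eq g s : infinite_sum g s -> series g = s.
Proof.
  intro H. apply uniqueness_sum with g; [|exact H].
  unfold series. apply epsilon_spec. now exists s.
Qed.

Lemma ln_le_compat x y : 0 < x -> x <= y -> ln x <= ln y.
Proof.
  intros Hx Hxy. destruct (Rle_lt_or_eq_dec x y Hxy) as [Hlt| ->]; [|lra].
  left. now apply ln_increasing.
Qed.

Lemma ln_le_sub1 x : 0 < x -> ln x <= x - 1.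
Proof.
  intros Hx. rewrite <- (ln_exp (x - 1)). apply ln_le_compat; auto.
  pose proof (exp_ineq1_le (x - 1)). lra.
Qed.

Lemma xln_ratio_le (P Q L : R) : 0 < P -> 0 < Q -> ln (P / Q) <= L -> 0 <= L ->
  P * ln (P / Q) <= (1 + L) * Rmax (P - Q) 0.
Proof.
  intros HP HQ HL HL0. set (r := P / Q) in *.
  assert (Hr : 0 < r) by (unfold r; apply Rdiv_lt_0_compat; lra).
  assert (HPr : P = Q * r) by (unfold r; field; lra).
  destruct (Rle_dec P Q).
  - rewrite Rmax_right by lra.
    assert (ln r <= ln 1) by (apply ln_le_compat; nra). rewrite ln_1 in *. nra.
  - rewrite Rmax_left by lra.
    (* Q ln r <= Q (r - 1) = P - Q, and the remaining (P - Q) ln r is at most (P - Q) L. *)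
    assert (Q * ln r <= Q * (r - 1)) by (apply Rmult_le_compat_l; [lra|now apply ln_le_sub1]).
    assert ((P - Q) * ln r <= (P - Q) * L) by (apply Rmult_le_compat_l; lra).
    nra.
Qed.

Lemma ln_div_le_ln_inv p q e : 0 < p <= 1 -> 0 < e <= q -> ln (p / q) <= ln (/ e).
Proof.
  intros Hp He. assert (0 < / q) by (apply Rinv_0_lt_compat; lra).
  assert (/ q <= / e) by (apply Rinv_le_contravar; lra).
  apply ln_le_compat; [apply Rdiv_lt_0_compat; lra|]. unfold Rdiv. nra.
Qed.

Lemma ln_inv_nonneg e : 0 < e <= 1 -> 0 <= ln (/ e).
Proof.
  intros He. rewrite <- ln_1. apply ln_le_compat; [lra|].
  rewrite <- Rinv_1. apply Rinv_le_contravar; lra.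
Qed.

Lemma Rmax_0_div a m : 0 < m -> Rmax (a / m) 0 = Rmax a 0 / m.
Proof.
  intros Hm. assert (0 < / m) by now apply Rinv_0_lt_compat.
  unfold Rdiv. destruct (Rle_dec a 0).
  - rewrite !Rmax_right; nra.
  - rewrite !Rmax_left; nra.
Qed.

Lemma lsum_xln_ratio_le (P Q : X -> R) l L :
  (forall x, In x l -> 0 < P x /\ 0 < Q x /\ ln (P x / Q x) <= L) -> 0 <= L ->
  lsum (fun x => P x * ln (P x / Q x)) l <= (1 + L) * lsum (fun x => Rmax (P x - Q x) 0) l.
Proof.
  intros HPQ HL. rewrite <- lsum_scal. apply lsum_le. intros x Hx.
  destruct (HPQ x Hx) as [HP [HQ Hr]]. now apply xln_ratio_le.
Qed.

Lemma normalized_ln_ratio_le (h1 h2 : X -> R) l x e :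
  (forall y, In y l -> 0 <= h1 y /\ 0 <= h2 y) -> lsum h2 l <= 1 -> In x l ->
  0 < h1 x -> 0 < e <= h2 x ->
  0 < h1 x / lsum h1 l /\ 0 < h2 x / lsum h2 l /\
  ln (h1 x / lsum h1 l / (h2 x / lsum h2 l)) <= ln (/ e).
Proof.
  intros Hh Hk1 Hx H1 H2.
  assert (h1 x <= lsum h1 l) by (apply lsum_term_le; auto; apply Hh).
  assert (h2 x <= lsum h2 l) by (apply lsum_term_le; auto; apply Hh).
  set (P := h1 x / lsum h1 l). set (Q := h2 x / lsum h2 l).
  assert (HP : P * lsum h1 l = h1 x) by (unfold P; field; lra).
  assert (HQ : Q * lsum h2 l = h2 x) by (unfold Q; field; lra).
  assert (0 < P <= 1) by nra.
  assert (e <= Q) by nra.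
  repeat split; try lra. apply ln_div_le_ln_inv; lra.
Qed.

Lemma lsum_Rmax_sub_swap (p q : X -> R) l : lsum p l = lsum q l ->
  lsum (fun x => Rmax (p x - q x) 0) l = lsum (fun x => Rmax (q x - p x) 0) l.
Proof.
  intros H.
  assert (lsum (fun x => Rmax (p x - q x) 0) l - lsum (fun x => Rmax (q x - p x) 0) l
          = lsum p l - lsum q l).
  { rewrite <- !lsum_minus. apply lsum_ext. intros x _.
    destruct (Rle_dec (p x) (q x)).
    - rewrite Rmax_right, Rmax_left; lra.
    - rewrite Rmax_left, Rmax_right; lra. }
  lra.
Qed.

Lemma lsum_Rmax_normalized_le (u v : X -> R) l :
  (forall x, In x l -> 0 <= v x) -> 0 < lsum u l -> 0 < lsum v l ->
  lsum (fun x => Rmax (u x / lsum u l - v x / lsum v l) 0) l <=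
  Rmax (lsum (fun x => Rmax (u x - v x) 0) l) (lsum (fun x => Rmax (v x - u x) 0) l) / lsum u l.
Proof.
  intros Hv HU HW. set (U := lsum u l) in *. set (W := lsum v l) in *.
  assert (HUinv : 0 < / U) by now apply Rinv_0_lt_compat.
  destruct (Rle_dec U W).
  - rewrite (lsum_Rmax_sub_swap (fun x => u x / U) (fun x => v x / W))
      by (rewrite !lsum_div; fold U W; field; lra).
    apply Rle_trans with (lsum (fun x => Rmax (v x - u x) 0) l / U).
    + rewrite <- lsum_div. apply lsum_le. intros x Hx. rewrite <- Rmax_0_div by lra.
      apply Rle_max_compat_r. assert (v x / W <= v x / U) by
        (unfold Rdiv; apply Rmult_le_compat_l; [auto|apply Rinv_le_contravar; lra]).
      unfold Rdiv in *. lra.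
    + unfold Rdiv. apply Rmult_le_compat_r; [lra|apply Rmax_r].
  - apply Rle_trans with (lsum (fun x => Rmax (u x - v x) 0) l / U).
    + rewrite <- lsum_div. apply lsum_le. intros x Hx. rewrite <- Rmax_0_div by lra.
      apply Rle_max_compat_r. assert (v x / U <= v x / W) by
        (unfold Rdiv; apply Rmult_le_compat_l; [auto|apply Rinv_le_contravar; lra]).
      unfold Rdiv in *. lra.
    + unfold Rdiv. apply Rmult_le_compat_r; [lra|apply Rmax_l].
Qed.

Lemma length_filter_lsum (xs : list X) (A : X -> bool) (l : list X) :
  NoDup l -> (forall x, In x xs -> A x = true -> In x l) ->
  INR (length (filter A xs)) =
  lsum (fun x => if A x then INR (length (filter (fun y => Nat.eqb y x) xs)) else 0) l.
Proof.
  intros Hnd. induction xs as [|y xs IH]; intros Hl.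
  - symmetry. apply lsum_zero. intros x _. now destruct (A x).
  - transitivity (INR (length (filter A xs)) + (if A y then 1 else 0)).
    { simpl filter. destruct (A y); simpl length; [rewrite S_INR|]; lra. }
    rewrite IH by (intros; apply Hl; simpl; auto).
    assert (Hy : lsum (fun x => if Nat.eqb y x then (if A y then 1 else 0) else 0) l
                 = if A y then 1 else 0).
    { rewrite lsum_delta by auto.
      destruct (A y) eqn:Ay, (in_dec Nat.eq_dec y l) as [|Hn]; auto.
      exfalso. apply Hn, Hl; simpl; auto. }
    rewrite <- Hy, <- lsum_plus. apply lsum_ext. intros x _. simpl filter.
    destruct (Nat.eqb_spec y x); subst; destruct (A x); simpl length; try rewrite S_INR; lra.
Qed.

Lemma emp_finite_support xs A l : NoDup l -> (forall x, In x xs -> A x = true -> In x l) ->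
  emp xs A = lsum (fun x => if A x then emp_pt xs x else 0) l.
Proof.
  intros Hnd Hl. unfold emp at 1. rewrite (length_filter_lsum xs A l Hnd Hl), <- lsum_div.
  apply lsum_ext. intros x _. unfold emp_pt, emp. destruct (A x); [reflexivity|unfold Rdiv; ring].
Qed.

Lemma emp_bounds xs A : (1 <= length xs)%nat -> 0 <= emp xs A <= 1.
Proof.
  intros Hn. assert (0 < INR (length xs)) by (apply lt_0_INR; lia).
  pose proof (pos_INR (length (filter A xs))).
  pose proof (le_INR _ _ (filter_length_le A xs)).
  unfold emp. split.
  - apply Rle_mult_inv_pos; lra.
  - apply Rmult_le_reg_r with (INR (length xs)); [lra|].
    unfold Rdiv. rewrite Rmult_assoc, Rinv_l; lra.
Qed.

Lemma In_of_emp_pt_pos xs x : 0 < emp_pt xs x -> In x xs.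
Proof.
  unfold emp_pt, emp. destruct (filter (fun y : X => Nat.eqb y x) xs) as [|z l] eqn:E.
  - simpl. unfold Rdiv. rewrite Rmult_0_l. lra.
  - intros _. assert (Hz : In z (filter (fun y : X => Nat.eqb y x) xs)) by (rewrite E; left; auto).
    apply filter_In in Hz as [Hz Hzx]. apply Nat.eqb_eq in Hzx. now subst.
Qed.

Lemma Gam_le xs eps x : Gam xs eps x = true -> eps <= emp_pt xs x.
Proof. unfold Gam. now destruct (Rle_dec eps (emp_pt xs x)). Qed.

Lemma Gam_enum xs eps : 0 < eps ->
  exists l, NoDup l /\ forall x, In x l <-> Gam xs eps x = true.
Proof.
  intros Heps. exists (filter (Gam xs eps) (nodup Nat.eq_dec xs)). split.
  - apply NoDup_filter, NoDup_nodup.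
  - intros x. rewrite filter_In, nodup_In. split; [tauto|].
    intros Hx. split; auto. apply In_of_emp_pt_pos. apply Gam_le in Hx. lra.
Qed.

(* Without a bound the supremum need not exist, and [Vdist] is then an arbitrary value. *)
Lemma Vdist_spec (G : X -> bool) (m1 m2 : (X -> bool) -> R) (B : R) :
  (forall A, in_sigma G A -> Rabs (m1 A - m2 A) <= B) ->
  forall A, in_sigma G A -> Rabs (m1 A - m2 A) <= Vdist G m1 m2.
Proof.
  intros HB A HA.
  set (E := fun r => exists A, in_sigma G A /\ r = Rabs (m1 A - m2 A)).
  assert (Hlub : is_lub E (Vdist G m1 m2)).
  { unfold Vdist. apply epsilon_spec.
    destruct (completeness E) as [v Hv].
    - exists B. intros r [A' [HA' ->]]. now apply HB.
    - exists (Rabs (m1 A - m2 A)). now exists A.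
    - now exists v. }
  apply Hlub. now exists A.
Qed.

Lemma Idiv_finite_support b p q l : NoDup l -> (forall x, ~ In x l -> p x = 0) ->
  (forall x, 0 <= p x) -> (forall x, 0 < p x -> 0 < q x) ->
  Idiv b p q = Fin (lsum (fun x => p x * ln (p x / q x)) l / ln b).
Proof.
  intros Hnd Hsupp Hp0 Hpq. unfold Idiv.
  destruct (excluded_middle_informative _) as [_|Hn]; [|contradiction].
  f_equal. rewrite <- lsum_div.
  set (g := fun x => if Rlt_dec 0 (p x) then p x * logb b (p x / q x) else 0).
  replace (lsum _ l) with (lsum g l).
  - apply series_eq, infinite_sum_finite_support; auto.
    intros x Hx. unfold g. rewrite Hsupp by auto. destruct (Rlt_dec 0 0); lra.
  - apply lsum_ext. intros x _. unfold g, logb.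
    destruct (Rlt_dec 0 (p x)); [unfold Rdiv; ring|].
    replace (p x) with 0 by (pose proof (Hp0 x); lra). unfold Rdiv. ring.
Qed.

Section FiniteBlocks.
Variables (G : X -> bool) (Gl : list X).
Hypothesis Gl_uniq : NoDup Gl.
Hypothesis Gl_spec : forall x, In x Gl <-> G x = true.


Lemma mu_lsum f A : (forall x, A x = true -> G x = true) ->
  mu f A = lsum (fun x => if A x then f x else 0) Gl.
Proof.
  intros HA. unfold mu. apply series_eq, infinite_sum_finite_support; auto.
  intros x Hx. destruct (A x) eqn:Ax; auto. exfalso. apply Hx, Gl_spec, HA, Ax.
Qed.

Lemma emp_lsum xs A : (forall x, A x = true -> G x = true) ->
  emp xs A = lsum (fun x => if A x then emp_pt xs x else 0) Gl.
Proof. intros HA. apply emp_finite_support; auto. intros x _ Hx. apply Gl_spec, HA, Hx. Qed.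

Lemma mu_block f : mu f G = lsum f Gl.
Proof.
  rewrite mu_lsum by auto. apply lsum_ext. intros x Hx. now rewrite (proj1 (Gl_spec x) Hx).
Qed.

Lemma emp_block xs : emp xs G = lsum (emp_pt xs) Gl.
Proof.
  rewrite emp_lsum by auto. apply lsum_ext. intros x Hx. now rewrite (proj1 (Gl_spec x) Hx).
Qed.

Lemma mu_sigma_bound f A : is_pmf f -> in_sigma G A -> Rabs (mu f A) <= 1 + lsum f Gl.
Proof.
  intros [Hf0 Hf1] HA.
  assert (Hpart : forall B : X -> bool, 0 <= lsum (fun x => if B x then f x else 0) Gl <= lsum f Gl).
  { intros B. split; [apply lsum_nonneg|apply lsum_le];
      intros x _; pose proof (Hf0 x); destruct (B x); lra. }
  (* A set of the sigma-field either lies inside G or contains its whole complement. *)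
  destruct (classic (exists y, G y = false /\ A y = true)) as [[y [Gy Ay]]|Hno].
  - set (B := fun x => andb (G x) (negb (A x))).
    assert (Hmu : mu f A = 1 - lsum (fun x => if B x then f x else 0) Gl).
    { unfold mu. apply series_eq.
      apply infinite_sum_ext with (fun x => f x - (if B x then f x else 0)).
      - intros x. unfold B. destruct (G x) eqn:Gx, (A x) eqn:Ax; simpl; try ring.
        rewrite (HA x y Gx Gy), Ay in Ax. discriminate.
      - apply infinite_sum_minus; [exact Hf1|]. apply infinite_sum_finite_support; auto.
        intros x Hx. unfold B. destruct (G x) eqn:Gx; [|reflexivity].
        exfalso. apply Hx, Gl_spec, Gx. }
    rewrite Hmu. specialize (Hpart B). apply Rabs_le. lra.
  - rewrite mu_lsum.
    + specialize (Hpart A). apply Rabs_le. lra.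
    + intros x Ax. destruct (G x) eqn:Gx; auto. exfalso. apply Hno. now exists x.
Qed.

Lemma mu_emp_le_Vdist f xs A : is_pmf f -> (1 <= length xs)%nat -> in_sigma G A ->
  Rabs (mu f A - emp xs A) <= Vdist G (mu f) (emp xs).
Proof.
  intros Hf Hn. apply Vdist_spec with (2 + lsum f Gl). intros A' HA'.
  pose proof (mu_sigma_bound f A' Hf HA'). pose proof (emp_bounds xs A' Hn).
  pose proof (Rle_abs (mu f A')). pose proof (Rle_abs (- mu f A')). rewrite Rabs_Ropp in *.
  apply Rabs_le. lra.
Qed.

Lemma Vdist_mu_emp_nonneg f xs : is_pmf f -> (1 <= length xs)%nat ->
  0 <= Vdist G (mu f) (emp xs).
Proof.
  intros Hf Hn. eapply Rle_trans; [apply Rabs_pos|].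
  apply (mu_emp_le_Vdist f xs (fun _ => false)); auto. now intros x y _ _.
Qed.

Lemma lsum_Rmax_sub_le (u v : X -> R) (m1 m2 : (X -> bool) -> R) (V : R) :
  (forall A, (forall x, A x = true -> G x = true) ->
     m1 A = lsum (fun x => if A x then u x else 0) Gl) ->
  (forall A, (forall x, A x = true -> G x = true) ->
     m2 A = lsum (fun x => if A x then v x else 0) Gl) ->
  (forall A, in_sigma G A -> Rabs (m1 A - m2 A) <= V) ->
  lsum (fun x => Rmax (u x - v x) 0) Gl <= V.
Proof.
  intros Hm1 Hm2 HV.
  set (A := fun x => andb (G x) (if Rlt_dec (v x) (u x) then true else false)).
  assert (HAG : forall x, A x = true -> G x = true) by (intros x Hx; now apply andb_prop in Hx).
  assert (HAs : in_sigma G A) by (intros x y Hx Hy; unfold A; now rewrite Hx, Hy).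
  eapply Rle_trans; [|apply (HV A HAs)]. eapply Rle_trans; [|apply Rle_abs].
  rewrite (Hm1 A HAG), (Hm2 A HAG), <- lsum_minus. right. apply lsum_ext. intros x Hx.
  unfold A. rewrite (proj1 (Gl_spec x) Hx). simpl. destruct (Rlt_dec (v x) (u x)).
  - apply Rmax_left. lra.
  - rewrite Rmax_right; lra.
Qed.

Lemma cond_Rmax_sub_le_Vdist f xs : is_pmf f -> (1 <= length xs)%nat ->
  0 < lsum f Gl -> 0 < lsum (emp_pt xs) Gl ->
  lsum (fun x => Rmax (f x / lsum f Gl - emp_pt xs x / lsum (emp_pt xs) Gl) 0) Gl
  <= Vdist G (mu f) (emp xs) / lsum f Gl.
Proof.
  intros Hf Hn Hm0 Hk0.
  eapply Rle_trans; [apply lsum_Rmax_normalized_le; auto|].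
  { intros x _. apply (emp_bounds xs _ Hn). }
  unfold Rdiv. apply Rmult_le_compat_r; [left; now apply Rinv_0_lt_compat|].
  apply Rmax_lub.
  - apply (lsum_Rmax_sub_le f (emp_pt xs) (mu f) (emp xs)); [exact (mu_lsum f)|exact (emp_lsum xs)|].
    intros A HA. now apply mu_emp_le_Vdist.
  - apply (lsum_Rmax_sub_le (emp_pt xs) f (emp xs) (mu f)); [exact (emp_lsum xs)|exact (mu_lsum f)|].
    intros A HA. rewrite Rabs_minus_sym. now apply mu_emp_le_Vdist.
Qed.

Lemma block_mass_bounds f xs eps : is_pmf f -> (1 <= length xs)%nat -> 0 < eps ->
  (forall x, G x = true -> 0 < f x /\ eps <= emp_pt xs x) -> (exists x, G x = true) ->
  0 < lsum f Gl /\ 0 < lsum (emp_pt xs) Gl <= 1.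
Proof.
  intros Hf Hn Heps HG [x0 Hx0]. assert (Hx0l : In x0 Gl) by now apply Gl_spec.
  destruct (HG x0 Hx0) as [Hfx0 Hex0].
  pose proof (lsum_term_le f Gl x0 (fun x _ => proj1 Hf x) Hx0l).
  pose proof (lsum_term_le (emp_pt xs) Gl x0 (fun x _ => proj1 (emp_bounds xs _ Hn)) Hx0l).
  pose proof (emp_bounds xs G Hn). rewrite emp_block in *. lra.
Qed.

Lemma cond_xln_ratio_le f xs eps : is_pmf f -> (1 <= length xs)%nat -> 0 < eps <= 1 ->
  (forall x, G x = true -> 0 < f x /\ eps <= emp_pt xs x) -> (exists x, G x = true) ->
  lsum (fun x => f x / lsum f Gl * ln (f x / lsum f Gl / (emp_pt xs x / lsum (emp_pt xs) Gl))) Gl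
  <= (1 + ln (/ eps)) * (Vdist G (mu f) (emp xs) / lsum f Gl).
Proof.
  intros Hf Hn Heps HG Hne.
  destruct (block_mass_bounds f xs eps Hf Hn (proj1 Heps) HG Hne) as [Hm0 [Hk0 Hk1]].
  eapply Rle_trans.
  - apply (lsum_xln_ratio_le (fun x => f x / lsum f Gl) (fun x => emp_pt xs x / lsum (emp_pt xs) Gl));
      [|now apply ln_inv_nonneg].
    intros x Hx. destruct (HG x (proj1 (Gl_spec x) Hx)).
    apply normalized_ln_ratio_le; auto; [|lra].
    intros y _. split; [apply Hf|apply (emp_bounds xs _ Hn)].
  - apply Rmult_le_compat_l; [pose proof (ln_inv_nonneg eps Heps); lra|].
    now apply cond_Rmax_sub_le_Vdist.
Qed.

Lemma Idiv_cond_mu_emp b f xs : (forall x, G x = true -> 0 <= f x /\ 0 < emp_pt xs x) ->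
  0 < lsum f Gl -> 0 < lsum (emp_pt xs) Gl ->
  Idiv b (cond_pmf (mu f) f G) (cond_pmf (emp xs) (emp_pt xs) G) =
  Fin (lsum (fun x => f x / lsum f Gl * ln (f x / lsum f Gl / (emp_pt xs x / lsum (emp_pt xs) Gl))) Gl
       / ln b).
Proof.
  intros HG Hm0 Hk0. unfold cond_pmf. rewrite mu_block, emp_block.
  rewrite (Idiv_finite_support b _ _ Gl Gl_uniq).
  - do 2 f_equal. apply lsum_ext. intros x Hx. now rewrite (proj1 (Gl_spec x) Hx).
  - intros x Hx. destruct (G x) eqn:Gx; [|reflexivity]. exfalso. apply Hx, Gl_spec, Gx.
  - intros x. destruct (G x) eqn:Gx; [|lra]. apply Rle_mult_inv_pos; [apply HG|]; auto.
  - intros x. destruct (G x) eqn:Gx; [|lra]. intros _. apply Rdiv_lt_0_compat; [apply HG|]; auto.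
Qed.

End FiniteBlocks.

Theorem mainTheorem11
  (b : R) (hb : 1 < b)
  (f : X -> R) (hf : is_pmf f)
  (xs : list X) (hn : (1 <= length xs)%nat)
  (eps : R) (heps0 : 0 < eps) (heps1 : eps <= 1)
  (hne : exists x, Gam xs eps x = true)
  (hsub : forall x, Gam xs eps x = true -> 0 < f x) :
  ER_le
    (Idiv b (cond_pmf (mu f) f (Gam xs eps))
            (cond_pmf (emp xs) (emp_pt xs) (Gam xs eps)))
    (Fin (2 * logb b (exp 1 / eps) / mu f (Gam xs eps)
          * Vdist (Gam xs eps) (mu f) (emp xs))).
Proof.
  set (G := Gam xs eps) in *.
  destruct (Gam_enum xs eps heps0) as [Gl [Hnd HGl]]. fold G in HGl.
  assert (HG : forall x, G x = true -> 0 < f x /\ eps <= emp_pt xs x)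
    by (intros x Hx; split; [apply hsub|apply Gam_le]; auto).
  destruct (block_mass_bounds G Gl Hnd HGl f xs eps hf hn heps0 HG hne) as [Hm0 [Hk0 _]].
  rewrite (Idiv_cond_mu_emp G Gl Hnd HGl b f xs), (mu_block G Gl Hnd HGl); auto;
    [|intros x Hx; destruct (HG x Hx); split; lra].
  pose proof (cond_xln_ratio_le G Gl Hnd HGl f xs eps hf hn (conj heps0 heps1) HG hne) as HD.
  set (V := Vdist G (mu f) (emp xs)) in *.
  assert (HB : 0 <= (1 + ln (/ eps)) * (V / lsum f Gl)).
  { pose proof (ln_inv_nonneg eps (conj heps0 heps1)).
    pose proof (Vdist_mu_emp_nonneg G Gl Hnd HGl f xs hf hn).
    apply Rmult_le_pos; [lra|]. now apply Rle_mult_inv_pos. }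
  assert (Hlnb : 0 < ln b) by (rewrite <- ln_1; apply ln_increasing; lra).
  assert (Hle : ln (exp 1 / eps) = 1 + ln (/ eps)).
  { unfold Rdiv. rewrite ln_mult, ln_exp; [reflexivity|apply exp_pos|now apply Rinv_0_lt_compat]. }
  simpl. unfold logb. rewrite Hle.
  replace (2 * ((1 + ln (/ eps)) / ln b) / lsum f Gl * V)
    with (2 * ((1 + ln (/ eps)) * (V / lsum f Gl)) / ln b) by (field; lra).
  unfold Rdiv at 1 3. apply Rmult_le_compat_r; [left; now apply Rinv_0_lt_compat|]. lra.
Qed.
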